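(* Let $p$ be an odd prime and $P$ a finite $p$-group of class $2$ and exponent $p$. If $\mathcal{H}$ and $\mathcal{K}$ are two fully refined central decompositions of $P$ such that $\{HZ(P) : H\in\mathcal{H}\}=\{KZ(P): K\in\mathcal{K}\}$, then $\mathcal{H}$ and $\mathcal{K}$ are exchangeable.
   Context: A central decomposition of a group $G$ is a set $\mathcal{H}$ of subgroups of $G$ such that distinct members commute elementwise, $G$ is generated by $\mathcal{H}$, and no proper subset of $\mathcal{H}$ generates $G$. A group is centrally indecomposable if its only central decomposition is $\{G\}$; a central decomposition is fully refined if all its members are centrally indecomposable. Two central decompositions $\mathcal{H}$ and $\mathcal{K}$ of $G$ are exchangeable if for each subset $\mathcal{J}\subseteq\mathcal{H}$ there is $\alpha\in\operatorname{Aut}G$ such that $\mathcal{J}\alpha\subseteq\mathcal{K}$ and $(\mathcal{H}-\mathcal{J})\alpha=\mathcal{H}-\mathcal{J}$, where $\mathcal{J}\alpha=\{J\alpha: J\in\mathcal{J}\}$. *)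

From mathcomp Require Import all_boot all_fingroup all_solvable.
Set Implicit Arguments. Unset Strict Implicit. Unset Printing Implicit Defensive.
Local Open Scope group_scope.

Section CentralDecomp.
Variable gT : finGroupType.

Definition gen_by (H : {set {group gT}}) : {set gT} :=
  << \bigcup_(X in H) gval X >>.

Definition central_decomp (G : {set gT}) (H : {set {group gT}}) : Prop :=
  [/\ (forall X Y : {group gT}, X \in H -> Y \in H -> X != Y ->
         gval X \subset 'C(gval Y)),
      gen_by H = G &
      (forall H' : {set {group gT}}, H' \proper H -> gen_by H' != G)].

Definition centrally_indecomposable (G : {group gT}) : Prop :=
  forall H : {set {group gT}}, central_decomp G H -> H = [set G].

Definition fully_refined (G : {set gT}) (H : {set {group gT}}) : Prop :=
  central_decomp G H /\ (forall X : {group gT}, X \in H -> centrally_indecomposable X).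

Definition gsets (H : {set {group gT}}) : {set {set gT}} :=
  [set gval X | X in H].

Definition img_fam (a : {perm gT}) (H : {set {group gT}}) : {set {set gT}} :=
  [set [set a x | x in gval X] | X in H].

Definition exchangeable (G : {set gT}) (H K : {set {group gT}}) : Prop :=
  forall J : {set {group gT}}, J \subset H ->
    exists2 a : {perm gT}, a \in Aut G &
      img_fam a J \subset gsets K /\ img_fam a (H :\: J) = gsets (H :\: J).

End CentralDecomp.

(* Since P has exponent p, Phi(X) = X' for every X <= P, so a centrally
   indecomposable subgroup X of P is either abelian of order p or
   non-abelian with Z(X) <= X'.  The members of H are exchanged for members
   of K one at a time.  Write P = X o R, with R generated by the other
   members; we find Y in K with P = Y o R and an isomorphism Y -> X that is
   the identity on Y /\ R.  Together with the identity of R it induces an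
   automorphism of P, whose inverse sends X to Y and fixes R.  For abelian X,
   Y is an abelian member of K not contained in R: otherwise Z(P) <= R,
   since P' <= R and the centre of every non-abelian member of K lies in P'.
   For non-abelian X, Y is the member of K with XZ(P) = YZ(P); then X' = Y',
   and projecting onto X along a complement of X' in the elementary abelian
   group Z(P) maps Y onto X. *)

From mathcomp Require Import all_boot all_fingroup all_solvable.
Set Implicit Arguments. Unset Strict Implicit. Unset Printing Implicit Defensive.
Local Open Scope group_scope.

Section Generation.
Variable gT : finGroupType.
Implicit Types (X Y G : {group gT}) (S : {set {group gT}}).

Definition pairwise_cent S :=
  forall X Y, X \in S -> Y \in S -> X != Y -> X \subset 'C(Y).

Lemma pairwise_centS S1 S2 : S1 \subset S2 -> pairwise_cent S2 -> pairwise_cent S1.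
Proof. by move=> sS12 cS2 X Y /(subsetP sS12) XS2 /(subsetP sS12); apply: cS2. Qed.

Lemma gen_by0 : gen_by set0 = 1 :> {set gT}.
Proof. by rewrite /gen_by big_set0 gen0. Qed.

Lemma gen_by1 X : gen_by [set X] = X.
Proof. by rewrite /gen_by big_set1 genGid. Qed.

Lemma gen_byU S1 S2 : gen_by (S1 :|: S2) = gen_by S1 <*> gen_by S2.
Proof. by rewrite /gen_by bigcup_setU joing_idl joing_idr. Qed.

Lemma sub_gen_by S X : X \in S -> X \subset gen_by S.
Proof. by move=> XS; apply: subset_trans (bigcup_sup X XS) (sub_gen _). Qed.

Lemma gen_by_subG S G : (forall X, X \in S -> X \subset G) -> gen_by S \subset G.
Proof. by move=> sSG; rewrite gen_subG; apply/bigcupsP. Qed.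

Lemma gen_byS S1 S2 : S1 \subset S2 -> gen_by S1 \subset gen_by S2.
Proof. by move=> sS12; apply: gen_by_subG => X /(subsetP sS12)/sub_gen_by. Qed.

Lemma gen_by_setU1 S X : gen_by S \subset 'C(X) -> gen_by (X |: S) = X * gen_by S.
Proof. by move=> cSX; rewrite gen_byU gen_by1 cent_joinEr. Qed.

Lemma pairwise_cent_gen_byD1 S X :
  pairwise_cent S -> X \in S -> gen_by (S :\ X) \subset 'C(X).
Proof.
by move=> cS XS; apply: gen_by_subG => Y /setD1P[neYX YS]; apply: cS.
Qed.

Lemma gen_byD1 S X :
  pairwise_cent S -> X \in S -> gen_by S = X * gen_by (S :\ X).
Proof.
by move=> cS XS; rewrite -gen_by_setU1 ?setD1K ?pairwise_cent_gen_byD1.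
Qed.

Lemma abelian_member_center S X :
  pairwise_cent S -> X \in S -> abelian X -> X \subset 'Z(gen_by S).
Proof.
move=> cS XS abX; rewrite subsetI sub_gen_by // centsC.
apply: gen_by_subG => Y YS; rewrite centsC.
by have [-> // | neYX] := eqVneq Y X; rewrite centsC cS // eq_sym.
Qed.

Lemma central_decomp_sub G S X : central_decomp G S -> X \in S -> X \subset G.
Proof. by case=> _ <- _; apply: sub_gen_by. Qed.

Lemma center_gen_by_sub S (D : {group gT}) :
  pairwise_cent S -> (forall X, X \in S -> 'Z(X) \subset D) ->
  'Z(gen_by S) \subset D.
Proof.
have [n] := ubnP #|S|; elim: n S => // n IH S ltSn cS sZD.
have [-> | [X XS]] := set_0Vmem S; first by rewrite gen_by0 center1 sub1G.
have cS'X := pairwise_cent_gen_byD1 cS XS.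
have cXS : 'C(gen_by S) \subset 'C(X) by rewrite centS ?sub_gen_by.
apply/subsetP => z /setIP[]; rewrite {1}(gen_byD1 cS XS).
case/mulsgP=> x y xX yS' -> cxy.
have xZ : x \in 'Z(X).
  rewrite inE xX -[x](mulgK y) groupM ?groupV ?(subsetP cXS _ cxy) //.
  exact: subsetP cS'X y yS'.
have yZ : y \in 'Z(gen_by (S :\ X)).
  have cXS' : 'C(gen_by S) \subset 'C(gen_by (S :\ X)).
    by rewrite centS ?gen_byS ?subD1set.
  rewrite inE yS' -[y](mulKg x) groupM ?groupV ?(subsetP cXS' _ cxy) //.
  by rewrite (subsetP _ x xX) // centsC.
rewrite groupM ?(subsetP (sZD X XS) x xZ) //; apply: (subsetP (IH _ _ _ _) y yZ).
- by rewrite (cardsD1 X) XS in ltSn.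
- exact: pairwise_centS (subD1set S X) cS.
- by move=> Y /setD1P[_ /sZD].
Qed.

End Generation.

Section Indecomposable.
Variable gT : finGroupType.
Implicit Types (X A B M : {group gT}) (S : {set {group gT}}).

Lemma indec_neq1 X : centrally_indecomposable X -> X :!=: 1.
Proof.
move=> indX; apply/eqP => X1.
have cd0 : central_decomp X set0.
  split=> [? ?|| S]; rewrite ?inE ?gen_by0 ?X1 //.
  by case/properP=> _ [Y]; rewrite inE.
by have /setP/(_ X) := indX _ cd0; rewrite !inE eqxx.
Qed.

Lemma indec_cent_joing X A B : centrally_indecomposable X ->
  A \subset 'C(B) -> A <*> B = X -> A :=: X \/ B :=: X.
Proof.
move=> indX cAB defX.
have [eAX | neAX] := eqVneq (gval A) (gval X); first by left.
have [eBX | neBX] := eqVneq (gval B) (gval X); first by right.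
have pAX : A \proper X by rewrite properEneq neAX -defX joing_subl.
have pBX : B \proper X by rewrite properEneq neBX -defX joing_subr.
suff /indX/setP/(_ A) : central_decomp X [set A; B].
  by rewrite !inE eqxx => /esym/eqP eAX; rewrite eAX eqxx in neAX.
split=> [C D | | S /properP[sS [C CAB CnS]]].
- by case/set2P=> -> /set2P[] -> //; rewrite ?eqxx // centsC.
- by rewrite gen_byU !gen_by1.
apply/eqP => genS.
have [D DAB sSD] : exists2 D, D \in [set A; B] & S \subset [set D].
  case/set2P: CAB => eC; [exists B | exists A]; rewrite ?inE ?eqxx ?orbT //;
  apply/subsetP=> D DS; have := subsetP sS D DS;
  by rewrite !inE => /orP[] /eqP eD; rewrite ?eD ?eqxx //; rewrite eC -eD DS in CnS.
have := gen_byS sSD; rewrite gen_by1 genS.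
by case/set2P: DAB => ->; apply/negP/proper_subn.
Qed.

Lemma indec_maximal_cycle X M z : centrally_indecomposable X ->
  z \in 'Z(X) -> maximal M X -> z \notin M -> X :=: <[z]>.
Proof.
move=> indX /setIP[zX cXz] maxM zM; have [pMX maxM'] := maxgroupP maxM.
have sMX := proper_sub pMX.
have cMz : M \subset 'C(<[z]>) by rewrite centsC cycle_subG (subsetP (centS sMX)).
have defX : M <*> <[z]> = X.
  apply: (contraNeq _ zM) => neJX.
  have sJX : M <*> <[z]> \subset X by rewrite join_subG sMX cycle_subG.
  rewrite -(maxM' (M <*> <[z]>)%G) ?joing_subl ?properEneq ?neJX //.
  by rewrite mem_gen // inE cycle_id orbT.
have [eMX | <- //] := indec_cent_joing indX cMz defX.
by rewrite eMX properxx in pMX.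
Qed.

End Indecomposable.

Section Products.
Variable gT : finGroupType.
Implicit Types (G X Y R W : {group gT}).

Lemma center_cent_sub G (A : {set gT}) : A \subset G -> 'Z(G) \subset 'C(A).
Proof. by move=> sAG; rewrite (subset_trans (subsetIr _ _)) ?centS. Qed.

Lemma der_mul_center G X Y : X \subset G -> Y \subset G ->
  X * 'Z(G) = Y * 'Z(G) -> X^`(1) = Y^`(1).
Proof.
have derXZ (A : {group gT}) : A \subset G -> (A <*> 'Z(G))^`(1) = A^`(1).
  move/center_cent_sub/cprodEY/(der_cprod 1)/cprodP => [_ <- _].
  by rewrite (derG1P (center_abelian G)) mulg1.
move=> sXG sYG eXY; rewrite -derXZ // -[RHS]derXZ //.
by rewrite !cent_joinEr ?center_cent_sub // eXY.
Qed.

Lemma aut_imsetM G a (A B : {set gT}) : a \in Aut G ->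
  A \subset G -> B \subset G -> a @: (A * B) = a @: A * a @: B.
Proof.
move=> AutGa sAG sBG; rewrite -!(autmE AutGa) -!morphimEsub ?mul_subG //.
exact: morphimMl.
Qed.

Lemma perm_imset_subset_eq (a : {perm gT}) (A B : {set gT}) :
  A \subset B -> a @: A = B -> A = B.
Proof.
by move=> sAB aA; apply/eqP; rewrite eqEcard sAB -aA (card_imset _ perm_inj) leqnn.
Qed.

Lemma cprod_aut_swap G X Y R (f : {morphism Y >-> gT}) :
  Y \* R = G -> X * R = G -> X \subset 'C(R) ->
  f @* Y = X -> {in Y :&: R, forall y, f y = y} ->
  exists2 a, a \in Aut G &
    a @: X = Y /\ (forall W : {set gT}, W \subset R -> a @: W = W).
Proof.
move=> defG defXR cXR fY fYR.
have cfYR : idm R @* R \subset 'C(f @* Y) by rewrite morphim_idm // fY centsC.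
have fYR' : {in Y :&: R, f =1 idm R} by move=> y /fYR.
pose g := cprodm defG cfYR fYR'.
have gG : g @* G = G by rewrite im_cprodm fY morphim_idm.
have injg : 'injm g by rewrite -card_im_injm gG.
have [sYG sRG] : Y \subset G /\ R \subset G.
  by have [_ <- _] := cprodP defG; rewrite mulG_subl mulG_subr.
have gY : aut injg gG @: Y = X by rewrite imset_autE // morphim_cprodml.
have gW (W : {set gT}) : W \subset R -> aut injg gG @: W = W.
  move=> sWR; rewrite imset_autE ?(subset_trans sWR) //.
  by rewrite morphim_cprodmr // morphim_idm.
have invK (A B : {set gT}) : aut injg gG @: A = B -> (aut injg gG)^-1 @: B = A.
  move=> <-; rewrite -imset_comp -[RHS]imset_id.
  by apply: eq_imset => y /=; rewrite permK.
exists (aut injg gG)^-1; first by rewrite groupV Aut_aut.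
by split=> [|W /gW]; apply: invK.
Qed.

Lemma dprod_proj_onto X W Y :
  W \subset 'C(X) -> X :&: W = 1 -> Y \subset X * W -> X \subset Y * W ->
  exists2 f : {morphism Y >-> gT}, f @* Y = X & {in Y :&: X, forall y, f y = y}.
Proof.
move=> cXW tiXW sYXW sXYW.
have defXW : X \x W = X <*> W by rewrite dprodEY.
have cf : trivm W @* W \subset 'C(idm X @* X) by rewrite morphim_trivm sub1G.
pose pi := dprodm defXW cf.
have sYJ : Y \subset X <*> W by rewrite cent_joinEr.
have piX (A : {set gT}) : A \subset X -> pi @* A = A.
  by move=> sAX; rewrite morphim_dprodml // morphim_idm.
have piW : pi @* W = 1 by rewrite morphim_dprodmr // morphim_trivm.
exists (restrm sYJ pi) => [|y /setIP[_ yX]]; last by rewrite /= /restrm /= dprodmEl.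
have piXW : pi @* (X * W) = X by rewrite morphimMl ?joing_subl // piX // piW mulg1.
have piYW : pi @* (Y * W) = pi @* Y by rewrite morphimMl // piW mulg1.
rewrite morphim_restrm setIid; apply/eqP.
have := morphimS pi sXYW; rewrite piX // piYW eqEsubset => ->.
by have := morphimS pi sYXW; rewrite piXW => ->.
Qed.

End Products.

Section ExponentP.
Variables (gT : finGroupType) (p : nat) (X : {group gT}).
Hypotheses (pX : p.-group X) (expX : exponent X %| p).

Lemma Mho1_exponent_p : 'Mho^1(X) = 1.
Proof.
rewrite (MhoE 1 pX) expn1; apply/trivgP; rewrite gen_subG.
apply/subsetP => _ /imsetP[x xX ->].
by rewrite inE -order_dvdn (dvdn_trans (dvdn_exponent xX)).
Qed.

Lemma Phi_exponent_p : 'Phi(X) = X^`(1).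
Proof. by rewrite (Phi_joing pX) Mho1_exponent_p joingG1. Qed.

Hypothesis indX : centrally_indecomposable X.

Lemma indec_center_cycle z : z \in 'Z(X) -> z \notin X^`(1) -> X :=: <[z]>.
Proof.
move=> zZ zD; have zX : z \in X by case/setIP: zZ.
have /exists_inP[M maxM zM] :
    [exists (M : {group gT} | maximal_eq M X), z \notin M].
  rewrite -negb_forall_in; apply: contra zD => /forall_inP zM.
  by rewrite -Phi_exponent_p; apply/bigcapP.
case/orP: maxM => [/eqP eMX | maxM]; first by rewrite eMX zX in zM.
exact: indec_maximal_cycle indX zZ maxM zM.
Qed.

Lemma indec_nonabelian_center : ~~ abelian X -> 'Z(X) \subset X^`(1).
Proof.
move=> nabX; apply/subsetP => z zZ; apply: contraR nabX => zD.
by rewrite (indec_center_cycle zZ zD) cycle_abelian.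
Qed.

Lemma indec_abelian_card : prime p -> abelian X -> #|X| = p.
Proof.
move=> pr_p abX; have [z zX ntz] := trivgPn _ (indec_neq1 indX).
have zZ : z \in 'Z(X) by rewrite (center_idP abX).
have zD : z \notin X^`(1) by rewrite (derG1P abX) inE.
rewrite (indec_center_cycle zZ zD) -orderE.
apply/(prime_nt_dvdP pr_p); first by rewrite order_eq1.
exact: dvdn_trans (dvdn_exponent zX) expX.
Qed.

End ExponentP.

Section Exchange.
Variables (gT : finGroupType) (p : nat) (P : {group gT}) (K : {set {group gT}}).
Hypotheses (pr_p : prime p) (pP : p.-group P) (expP : exponent P %| p).
Hypotheses (sP'Z : P^`(1) \subset 'Z(P)) (frK : fully_refined P K).
Implicit Types (X Y W : {group gT}) (L J : {set {group gT}}).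

Lemma exponent_sub_p X : X \subset P -> exponent X %| p.
Proof. by move/exponentS/dvdn_trans; apply. Qed.

Lemma fully_refined_abelian_card L X :
  fully_refined P L -> X \in L -> abelian X -> #|X| = p.
Proof.
move=> [decL indL] XL; have sXP := central_decomp_sub decL XL.
exact: indec_abelian_card (pgroupS sXP pP) (exponent_sub_p sXP) (indL X XL) pr_p.
Qed.

Lemma fully_refined_nonabelian_center L X :
  fully_refined P L -> X \in L -> ~~ abelian X -> 'Z(X) \subset X^`(1).
Proof.
move=> [decL indL] XL; have sXP := central_decomp_sub decL XL.
exact: indec_nonabelian_center (pgroupS sXP pP) (exponent_sub_p sXP) (indL X XL).
Qed.

(* What survives of full refinement (together with XZ(P) in KZ(P)) when one
   member is exchanged for a member of K: minimality is weakened to the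
   non-redundancy of the abelian members. *)
Definition adapted L : Prop :=
  [/\ pairwise_cent L, gen_by L = P,
      forall X, X \in L -> abelian X -> #|X| = p /\ gen_by (L :\ X) != P &
      forall X, X \in L -> ~~ abelian X ->
        'Z(X) \subset X^`(1) /\ exists2 Y, Y \in K & X * 'Z(P) = Y * 'Z(P)].

Lemma fully_refined_adapted L : fully_refined P L ->
  (forall X, X \in L -> exists2 Y, Y \in K & X * 'Z(P) = Y * 'Z(P)) -> adapted L.
Proof.
move=> frL ZLK; have [[cL gL minL] _] := frL.
split=> // X XL abX; split; last exact: ZLK.
- exact: fully_refined_abelian_card frL XL abX.
- exact/minL/properD1.
- exact: fully_refined_nonabelian_center frL XL abX.
Qed.

Lemma adapted_cprod L X : adapted L -> X \in L -> X \* gen_by (L :\ X) = P.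
Proof.
case=> cL gL _ _ XL; have cRX := pairwise_cent_gen_byD1 cL XL.
by rewrite cprodE // -gen_byD1.
Qed.

Lemma adapted_not_sub L X : adapted L -> X \in L -> ~~ (X \subset gen_by (L :\ X)).
Proof.
move=> adL XL; have [cL gL abL _] := adL; have cRX := pairwise_cent_gen_byD1 cL XL.
apply/negP => sXR; have [abX | nabX] := boolP (abelian X).
  by case: (abL X XL abX) => _ /negP[]; rewrite -gL (gen_byD1 cL XL) mulSGid.
by rewrite /abelian (subset_trans sXR cRX) in nabX.
Qed.

Definition replaceable (R : {set gT}) X Y :=
  Y \* R = P /\
  exists2 f : {morphism Y >-> gT}, f @* Y = X & {in Y :&: R, forall y, f y = y}.

Lemma exchange_abelian L X : adapted L -> X \in L -> abelian X ->
  exists2 Y, Y \in K & replaceable (gen_by (L :\ X)) X Y.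
Proof.
move=> adL XL abX; set R := gen_by (L :\ X).
have [[cK gK _] _] := frK; have [cL gL abL _] := adL; have [oX _] := abL X XL abX.
have defXR : X \* R = P := adapted_cprod adL XL.
have [_ eXR _] := cprodP defXR.
have sRP : R \subset P by rewrite -eXR mulG_subr.
have sP'R : P^`(1) \subset R.
  have /cprodP[_ <- _] := der_cprod 1 defXR.
  by rewrite (derG1P abX) mul1g der_sub.
have sXZ : X \subset 'Z(P) by rewrite -gL abelian_member_center.
have XnR : ~~ (X \subset R) := adapted_not_sub adL XL.
have [Y YK nZYR] : exists2 Y, Y \in K & ~~ ('Z(Y) \subset R).
  apply/exists_inP; rewrite -negb_forall_in; apply: contra XnR => /forall_inP sZR.
  by rewrite (subset_trans sXZ) // -gK center_gen_by_sub.
have sYP : Y \subset P by rewrite -gK sub_gen_by.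
have abY : abelian Y.
  apply: contraR nZYR => nabY.
  apply: subset_trans (subset_trans (dergS 1 sYP) sP'R).
  exact: fully_refined_nonabelian_center frK YK nabY.
have oY : #|Y| = p := fully_refined_abelian_card frK YK abY.
have sYZ : Y \subset 'Z(P) by rewrite -gK abelian_member_center.
have cRY : R \subset 'C(Y) by rewrite centsC (subset_trans sYZ) ?center_cent_sub.
have YnR : ~~ (Y \subset R) by rewrite -(center_idP abY).
have tiYR : Y :&: R = 1 by apply: prime_TIg; rewrite ?oY.
have tiXR : X :&: R = 1 by apply: prime_TIg; rewrite ?oX.
exists Y => //; split.
  rewrite cprodE //; apply/eqP; rewrite eqEcard mul_subG //=.
  by rewrite -{1}eXR !TI_cardMg // oX oY.
have /isogP[f injf fY] : Y \isog X.
  by rewrite isog_cyclic_card ?prime_cyclic ?oY ?oX ?eqxx.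
by exists f => // y; rewrite tiYR => /set1P ->; rewrite morph1.
Qed.

Lemma mul_center_proj X Y : X \subset P -> Y \subset P ->
  'Z(X) \subset X^`(1) -> X * 'Z(P) = Y * 'Z(P) ->
  exists2 f : {morphism Y >-> gT}, f @* Y = X & {in Y :&: X, forall y, f y = y}.
Proof.
move=> sXP sYP sZX' eXY; have eX'Y' := der_mul_center sXP sYP eXY.
have sX'Z : X^`(1) \subset 'Z(P) := subset_trans (dergS 1 sXP) sP'Z.
have abZ : p.-abelem 'Z(P).
  by rewrite abelemE // center_abelian exponent_sub_p ?center_sub.
have [W /complP[tiX'W defZ]] := splitsP (abelem_splits abZ sX'Z).
have sWZ : W \subset 'Z(P) by rewrite -defZ mulG_subr.
have cXW : W \subset 'C(X) := subset_trans sWZ (center_cent_sub sXP).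
have mulZW (A : {group gT}) : X^`(1) \subset A -> A * 'Z(P) = A * W.
  by move=> sX'A; rewrite -defZ mulgA (mulGSid sX'A).
have tiXW : X :&: W = 1.
  apply/trivgP; rewrite -tiX'W subsetI subsetIr andbT (subset_trans _ sZX') //.
  by rewrite subsetI subsetIl (subset_trans (subsetIr _ _)).
apply: dprod_proj_onto cXW tiXW _ _.
  by rewrite -mulZW ?der_sub // eXY mulG_subl.
by rewrite -mulZW ?eX'Y' ?der_sub // -eXY mulG_subl.
Qed.

Lemma exchange_nonabelian L X : adapted L -> X \in L -> ~~ abelian X ->
  exists2 Y, Y \in K & replaceable (gen_by (L :\ X)) X Y.
Proof.
move=> adL XL nabX; set R := gen_by (L :\ X).
have [[_ gK _] _] := frK; have [_ _ _ naL] := adL.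
have [sZX' [Y YK eXY]] := naL X XL nabX.
have defXR : X \* R = P := adapted_cprod adL XL.
have [_ eXR cRX] := cprodP defXR.
have [sXP sRP] : X \subset P /\ R \subset P by rewrite -eXR mulG_subl mulG_subr.
have sYP : Y \subset P by rewrite -gK sub_gen_by.
have eX'Y' : X^`(1) = Y^`(1) := der_mul_center sXP sYP eXY.
have nabY : ~~ abelian Y.
  by apply: contra nabX => /derG1P Y'1; apply/derG1P; rewrite eX'Y'.
have [f fY fYX] := mul_center_proj sXP sYP sZX' eXY.
have cRY : R \subset 'C(Y).
  rewrite centsC (subset_trans (mulG_subl 'Z(P) Y)) // -eXY.
  by rewrite mul_subG ?center_cent_sub // centsC.
have sYRX : Y :&: R \subset X.
  have sYRZ : Y :&: R \subset 'Z(Y).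
    rewrite subsetI subsetIl (subset_trans _ (center_cent_sub sYP)) //.
    rewrite subsetI (subset_trans (subsetIr _ _) sRP) /= -eXR centM subsetI.
    rewrite (subset_trans (subsetIr _ _) cRX).
    by rewrite (subset_trans (subsetIl _ _)) 1?centsC.
  apply: subset_trans sYRZ (subset_trans _ (der_sub 1 X)).
  by rewrite eX'Y' (fully_refined_nonabelian_center frK YK nabY).
exists Y => //; split; last first.
  exists f => // y yYR; have [yY _] := setIP yYR.
  by rewrite fYX // inE yY (subsetP sYRX).
have sZYR : 'Z(P) \subset Y <*> R.
  have /cprodP[_ <- _] := center_cprod defXR.
  rewrite cent_joinEr // mulgSS ?center_sub // (subset_trans sZX') //.
  by rewrite eX'Y' der_sub.
have sXYR : X \subset Y <*> R.
  by rewrite (subset_trans (mulG_subl 'Z(P) X)) // eXY mul_subG ?joing_subl.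
rewrite cprodE //; apply/eqP; rewrite eqEsubset mul_subG //= -{1}eXR.
by rewrite -(cent_joinEr cRY) mul_subG ?joing_subr.
Qed.

Lemma exchange_member L X : adapted L -> X \in L ->
  exists2 Y, Y \in K & exists2 a, a \in Aut P &
    [/\ a @: X = Y, Y \* gen_by (L :\ X) = P &
        forall W : {set gT}, W \subset gen_by (L :\ X) -> a @: W = W].
Proof.
move=> adL XL; have [Y YK [defYR [f fY fYR]]] :
    exists2 Y, Y \in K & replaceable (gen_by (L :\ X)) X Y.
  by have [abX | nabX] := boolP (abelian X);
    [apply: exchange_abelian | apply: exchange_nonabelian].
have [_ eXR cRX] := cprodP (adapted_cprod adL XL).
have cXR : X \subset 'C(gen_by (L :\ X)) by rewrite centsC.
have [a AutPa [aX aW]] := cprod_aut_swap defYR eXR cXR fY fYR.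
by exists Y => //; exists a.
Qed.

Section ExchangeStep.
Variables (L : {set {group gT}}) (X Y : {group gT}) (a : {perm gT}).
Hypotheses (adL : adapted L) (XL : X \in L) (YK : Y \in K) (AutPa : a \in Aut P).
Hypotheses (aX : a @: X = Y) (defYR : Y \* gen_by (L :\ X) = P).
Hypothesis aR : forall W : {set gT}, W \subset gen_by (L :\ X) -> a @: W = W.

Lemma exchanged_notin : Y \notin L :\ X.
Proof.
apply: contra (adapted_not_sub adL XL) => /sub_gen_by sYR.
by rewrite (imset_inj (@perm_inj _ a) (etrans aX (esym (aR sYR)))).
Qed.

Lemma gen_by_exchangedD1 X0 : X0 \in L :\ X ->
  gen_by ((Y |: (L :\ X)) :\ X0) = a @: gen_by (L :\ X0).
Proof.
case/setD1P=> neX0X X0L; have [cL gL _ _] := adL; have [_ eYR cRY] := cprodP defYR.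
set S := (L :\ X) :\ X0; have sSR : gen_by S \subset gen_by (L :\ X).
  by rewrite gen_byS ?subD1set.
have sSP : gen_by S \subset P by rewrite (subset_trans sSR) // -eYR mulG_subr.
have -> : (Y |: (L :\ X)) :\ X0 = Y |: S.
  apply/setP=> B; rewrite !inE; case: eqVneq => // ->.
  rewrite orbF; apply/esym/negbTE; apply: contraNneq exchanged_notin => <-.
  exact/setD1P.
have -> : gen_by (L :\ X0) = X * gen_by S.
  rewrite (gen_byD1 (pairwise_centS (subD1set L X0) cL) (X := X)).
    by rewrite /S !setDDl setUC.
  by rewrite !inE XL eq_sym neX0X.
rewrite gen_by_setU1 ?(subset_trans sSR) // (aut_imsetM AutPa) ?aX ?aR //.
by rewrite -gL sub_gen_by.
Qed.

Lemma adapted_exchange : adapted (Y |: (L :\ X)).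
Proof.
have [cL gL abL naL] := adL; have [_ eYR cRY] := cprodP defYR.
have cLX : pairwise_cent (L :\ X) := pairwise_centS (subD1set L X) cL.
split=> [A B | | X0 | X0].
- case/setU1P=> [-> | AL] /setU1P[-> | BL]; rewrite ?eqxx // => neAB.
  + by rewrite centsC (subset_trans (sub_gen_by BL)).
  + exact: subset_trans (sub_gen_by AL) cRY.
  + exact: cLX.
- by rewrite gen_by_setU1.
- case/setU1P=> [-> abY | X0L abX0].
    split; first exact: fully_refined_abelian_card frK YK abY.
    rewrite setU1K ?exchanged_notin //.
    by apply: contraNneq (adapted_not_sub adL XL) => ->; rewrite -gL sub_gen_by.
  have [_ X0L'] := setD1P X0L; have [oX0 nrX0] := abL X0 X0L' abX0.
  split=> //; rewrite gen_by_exchangedD1 //; apply: contra nrX0.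
  by move=> /eqP/perm_imset_subset_eq-> //; rewrite -gL gen_byS ?subD1set.
- case/setU1P=> [-> nabY | /setD1P[_ /naL //]].
  by split; [apply: fully_refined_nonabelian_center frK YK nabY | exists Y].
Qed.

End ExchangeStep.

Lemma adapted_exchangeable L J : adapted L -> J \subset L ->
  exists2 a, a \in Aut P &
    (forall X, X \in J -> a @: X \in gsets K) /\
    (forall W, W \in L -> W \notin J -> a @: W = W).
Proof.
have [n] := ubnP #|J|; elim: n L J => // n IH L J ltJn adL sJL.
have [-> | [X XJ]] := set_0Vmem J.
  exists 1; first exact: group1.
  split=> [X | W _ _]; first by rewrite inE.
  by rewrite -[RHS]imset_id; apply: eq_imset => x; rewrite perm1.
have XL := subsetP sJL X XJ.
have [Y YK [a1 AutPa1 [a1X defYR a1R]]] := exchange_member adL XL.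
have YnL := exchanged_notin adL XL a1X a1R.
have adL' := adapted_exchange adL XL YK AutPa1 a1X defYR a1R.
have sJL' : J :\ X \subset Y |: (L :\ X).
  by apply/subsetP=> B /setD1P[neBX BJ]; rewrite !inE neBX (subsetP sJL) ?orbT.
have ltJn' : #|J :\ X| < n by rewrite (cardsD1 X) XJ in ltJn.
have [a2 AutPa2 [a2J a2L]] := IH _ _ ltJn' adL' sJL'.
have a1L W : W \in L -> W != X -> a1 @: W = W.
  by move=> WL neWX; rewrite a1R //; apply/sub_gen_by/setD1P.
have a12 (A : {set gT}) : (a1 * a2) @: A = a2 @: (a1 @: A).
  by rewrite -imset_comp; apply: eq_imset => x; rewrite permM.
exists (a1 * a2); first by rewrite groupM.
split=> [B BJ | W WL WnJ]; rewrite a12.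
  have [-> | neBX] := eqVneq B X; last first.
    by rewrite a1L ?(subsetP sJL) ?a2J ?inE ?neBX.
  rewrite a1X a2L ?setU11 ?imset_f //.
  by apply: contra YnL; apply: subsetP; rewrite setSD.
have neWX : W != X by apply: contraNneq WnJ => ->.
by rewrite a1L // a2L // !inE ?neWX ?WL ?WnJ ?orbT.
Qed.

End Exchange.

Theorem theorem2p8 (gT : finGroupType) (p : nat) (P : {group gT})
    (H K : {set {group gT}}) :
  prime p -> odd p -> p.-group P -> nil_class P = 2 -> exponent P = p ->
  fully_refined P H -> fully_refined P K ->
  [set gval X * 'Z(P) | X in H] = [set gval Y * 'Z(P) | Y in K] ->
  exchangeable P H K.
Proof.
move=> pr_p _ pP clP expP frH frK eHK J sJH.
have sP'Z : P^`(1) \subset 'Z(P) by rewrite -nil_class2 clP.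
have expP_p : exponent P %| p by rewrite expP.
have adH : adapted p P K H.
  apply: fully_refined_adapted => // X XH.
  have /imsetP[Y YK eXY] : X * 'Z(P) \in [set gval Y * 'Z(P) | Y in K].
    by rewrite -eHK; apply/imsetP; exists X.
  by exists Y.
have [a AutPa [aJ aH]] := adapted_exchangeable pr_p pP expP_p sP'Z frK adH sJH.
exists a => //; split.
  by apply/subsetP=> _ /imsetP[X XJ ->]; apply: aJ.
by apply: eq_in_imset => X /setDP[XH XnJ]; apply: aH.
Qed.
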